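(* Let $X,Y,Z$ be random variables on finite alphabets $\mathcal{X},\mathcal{Y},\mathcal{Z}$, and let $\operatorname{Un}(X\to Z\mid Y)$ be the unique information defined below. Then $\operatorname{Un}(X\to Z\mid Y)\le H(Z\mid Y)$.
   Context: For each $y\in\mathcal{Y}$ with $\Pr(Y=y)>0$, let $(A_y,B_y,C_y)$ be the random triple on $\mathcal{X}\times\mathcal{Y}\times\mathcal{Z}$ with $\Pr(A_y=x,B_y=y',C_y=z)=0$ if $\Pr(Z=z)=0$ and $\Pr(A_y=x,B_y=y',C_y=z)=\Pr(X=x,Y=y',Z=z)\Pr(Z=z\mid Y=y)/\Pr(Z=z)$ otherwise. The unique information is $\operatorname{Un}(X\to Z\mid Y)=\sum_{y:\Pr(Y=y)>0}\Pr(Y=y)\,I(A_y;C_y)$, where $I$ is mutual information and $H$ Shannon entropy. *)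

(* R : realType, natural logarithm [ln] from mathcomp-analysis.
   Information quantities are in nats; the inequality is base-independent. *)
From mathcomp Require Import all_boot all_order all_algebra.
From mathcomp Require Import reals exp.
Set Implicit Arguments. Unset Strict Implicit. Unset Printing Implicit Defensive.
Import Order.TTheory GRing.Theory Num.Theory.
Local Open Scope ring_scope.

Section Info.
Variables (R : realType).

Definition mutual_info (A C : finType) (q : A -> C -> R) : R :=
  \sum_(a : A) \sum_(c : C)
     (if q a c == 0 then 0
      else q a c * ln (q a c / ((\sum_(c' : C) q a c') * (\sum_(a' : A) q a' c)))).

Variables (X Y Z : finType) (P : X -> Y -> Z -> R).
(* P x y z = Pr(X=x, Y=y, Z=z) *)

Definition pY (y : Y) : R := \sum_(x : X) \sum_(z : Z) P x y z.
Definition pZ (z : Z) : R := \sum_(x : X) \sum_(y : Y) P x y z.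
Definition pYZ (y : Y) (z : Z) : R := \sum_(x : X) P x y z.

Definition condZY (y : Y) (z : Z) : R := pYZ y z / pY y.

Definition triple_y (y : Y) (x : X) (y' : Y) (z : Z) : R :=
  if pZ z == 0 then 0 else P x y' z * condZY y z / pZ z.

Definition AC_y (y : Y) (x : X) (z : Z) : R := \sum_(y' : Y) triple_y y x y' z.

Definition unique_info : R :=
  \sum_(y : Y | 0 < pY y) pY y * mutual_info (AC_y y).

Definition cond_entropy_ZY : R :=
  - \sum_(y : Y) \sum_(z : Z)
      (if pYZ y z == 0 then 0 else pYZ y z * ln (pYZ y z / pY y)).

End Info.

(** The [C]-marginal of [(A_y, C_y)] is the law of [Z] given [Y = y].  Mutual
    information never exceeds the entropy of its second argument (termwise,
    [q(a,c) / (q(a) q(c)) <= 1 / q(c)]), so [I(A_y; C_y) <= H(Z | Y = y)], and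
    averaging over [y] with weights [Pr(Y = y)] gives the claim. *)
From mathcomp Require Import all_boot all_order all_algebra.
From mathcomp Require Import reals exp.
Set Implicit Arguments. Unset Strict Implicit. Unset Printing Implicit Defensive.
Import Order.TTheory GRing.Theory Num.Theory.
Local Open Scope ring_scope.

Section MutualInfo.
Variable R : realType.

Definition entropy (C : finType) (p : C -> R) : R := - \sum_(c : C) p c * ln (p c).

Lemma ler_sum_term (I : finType) (F : I -> R) i :
  (forall j, 0 <= F j) -> F i <= \sum_j F j.
Proof. by move=> F_ge0; rewrite (bigD1 i) //= lerDl sumr_ge0. Qed.

Lemma mutual_info_le_entropy (A C : finType) (q : A -> C -> R) (p : C -> R) :
  (forall a c, 0 <= q a c) -> (forall c, \sum_(a : A) q a c = p c) ->
  mutual_info q <= entropy p.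
Proof.
move=> q_ge0 q_marg; rewrite /mutual_info /entropy -sumrN exchange_big /=.
apply: ler_sum => c _; rewrite -q_marg mulr_suml -sumrN; apply: ler_sum => a _.
have [->|qn0] := eqVneq (q a c) 0; first by rewrite mul0r oppr0.
set qa := \sum_(c' : C) q a c'; set m := \sum_(a' : A) q a' c.
have q_gt0 : 0 < q a c by rewrite lt0r qn0 q_ge0.
have q_le_qa : q a c <= qa := ler_sum_term c (q_ge0 a).
have q_le_m : q a c <= m := ler_sum_term a (q_ge0^~ c).
have qa_gt0 : 0 < qa := lt_le_trans q_gt0 q_le_qa.
have m_gt0 : 0 < m := lt_le_trans q_gt0 q_le_m.
rewrite invfM mulrA lnM ?posrE ?divr_gt0 ?invr_gt0 // lnV ?posrE //.
rewrite mulrDr mulrN -[leRHS]add0r lerD2r pmulr_rle0 // ln_le0 //.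
by rewrite ler_pdivrMr // mul1r.
Qed.

End MutualInfo.

Section UniqueInfo.
Variables (R : realType) (X Y Z : finType) (P : X -> Y -> Z -> R).
Hypothesis P_ge0 : forall x y z, 0 <= P x y z.

Lemma pY_ge0 y : 0 <= pY P y.
Proof. by apply: sumr_ge0 => x _; apply: sumr_ge0. Qed.

Lemma pZ_ge0 z : 0 <= pZ P z.
Proof. by apply: sumr_ge0 => x _; apply: sumr_ge0. Qed.

Lemma pYZ_ge0 y z : 0 <= pYZ P y z.
Proof. exact: sumr_ge0. Qed.

Lemma pYZ_le_pY y z : pYZ P y z <= pY P y.
Proof. apply: ler_sum => x _; exact: ler_sum_term z (P_ge0 x y). Qed.

Lemma pYZ_le_pZ y z : pYZ P y z <= pZ P z.
Proof. apply: ler_sum => x _; exact: ler_sum_term y (fun y' => P_ge0 x y' z). Qed.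

Lemma pYZ_eq0 y z : (pY P y == 0) || (pZ P z == 0) -> pYZ P y z = 0.
Proof.
move=> /orP[] /eqP p0; apply/eqP; rewrite eq_le pYZ_ge0 andbT -p0.
  exact: pYZ_le_pY.
exact: pYZ_le_pZ.
Qed.

Lemma AC_y_ge0 y x z : 0 <= AC_y P y x z.
Proof.
apply: sumr_ge0 => y' _; rewrite /triple_y; case: ifP => // _.
by rewrite divr_ge0 ?mulr_ge0 ?divr_ge0 ?invr_ge0 ?pYZ_ge0 ?pY_ge0 ?pZ_ge0.
Qed.

Lemma sum_AC_y y z : \sum_(x : X) AC_y P y x z = condZY P y z.
Proof.
rewrite /AC_y /triple_y; have [pZ0|pZn0] := eqVneq (pZ P z) 0.
  rewrite /condZY pYZ_eq0 ?pZ0 ?eqxx ?orbT // mul0r.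
  by apply: big1 => x _; apply: big1.
under eq_bigr => x _ do rewrite -2!mulr_suml.
by rewrite -2!mulr_suml mulrAC -/(pZ P z) divff // mul1r.
Qed.

(* The terms with [pY P y = 0] vanish, matching the range of [unique_info]. *)
Lemma cond_entropy_ZYE :
  cond_entropy_ZY P = \sum_(y | 0 < pY P y) pY P y * entropy (condZY P y).
Proof.
rewrite /cond_entropy_ZY (bigID (fun y => 0 < pY P y)) /=.
rewrite [X in _ + X]big1 ?addr0 -?sumrN; last first.
  move=> y; rewrite lt0r pY_ge0 andbT negbK => pY0.
  by apply: big1 => z _; rewrite pYZ_eq0 ?pY0 ?eqxx.
apply: eq_bigr => y pY_gt0; rewrite /entropy mulrN mulr_sumr; congr (- _).
apply: eq_bigr => z _; rewrite /condZY.
have [->|pYZn0] := eqVneq (pYZ P y z) 0; first by rewrite !mul0r mulr0.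
by rewrite mulrCA mulrA divfK ?gt_eqF.
Qed.

End UniqueInfo.

Theorem lemma5 (R : realType) (X Y Z : finType) (P : X -> Y -> Z -> R)
  (P_ge0 : forall x y z, 0 <= P x y z)
  (P_sum1 : \sum_(x : X) \sum_(y : Y) \sum_(z : Z) P x y z = 1) :
  unique_info P <= cond_entropy_ZY P.
Proof.
rewrite /unique_info (cond_entropy_ZYE P_ge0); apply: ler_sum => y _.
rewrite ler_wpM2l ?pY_ge0 //.
exact: mutual_info_le_entropy (AC_y_ge0 P_ge0 y) (sum_AC_y P_ge0 y).
Qed.
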